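(* Let $\mathcal{H}$ be a complex Hilbert space and $A,B\in\mathcal{B}(\mathcal{H})$. Then for every non-negative non-decreasing convex function $h$ on $[0,\infty)$, \[ h\big(\omega(A^{*}B)\big) \leq \frac{1}{2} h\big(\|A\|\,\|B\|\big) + \frac{1}{2} h\big(\omega(BA^{*})\big). \]
   Context: $\omega(T)=\sup\{|\langle Tx,x\rangle|:x\in\mathcal{H},\|x\|=1\}$ denotes the numerical radius and $\|\cdot\|$ the operator norm. *)

From HB Require Import structures.
From mathcomp Require Import all_boot all_order all_algebra.
From mathcomp Require Import complex.
From mathcomp Require Import boolp classical_sets reals.
Set Implicit Arguments. Unset Strict Implicit. Unset Printing Implicit Defensive.
Import Order.TTheory GRing.Theory Num.Theory.
Local Open Scope ring_scope.
Local Open Scope classical_set_scope.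

Section Hilbert.
Variables (R : realType) (H : lmodType R[i]) (ip : H -> H -> R[i]).

Definition hnorm (x : H) : R := Num.sqrt (complex.Re (ip x x)).

Definition is_inner_product : Prop :=
  [/\ (forall (a : R[i]) (x y z : H), ip (a *: x + y) z = a * ip x z + ip y z),
      (forall x y : H, ip x y = (ip y x)^*),
      (forall x : H, 0 <= ip x x) &
      (forall x : H, ip x x = 0 -> x = 0)].

Definition hcomplete : Prop :=
  forall u : nat -> H,
    (forall e : R, 0 < e -> exists N : nat, forall m n : nat,
        (N <= m)%N -> (N <= n)%N -> hnorm (u m - u n) < e) ->
    exists l : H, forall e : R, 0 < e -> exists N : nat, forall n : nat,
        (N <= n)%N -> hnorm (u n - l) < e.

Definition is_hilbert : Prop := is_inner_product /\ hcomplete.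

Definition bounded_op (T : H -> H) : Prop :=
  linear T /\ exists M : R, forall x : H, hnorm (T x) <= M * hnorm x.

Definition is_adjoint (T Ts : H -> H) : Prop :=
  forall x y : H, ip (T x) y = ip x (Ts y).

Definition opnorm (T : H -> H) : R :=
  sup [set r : R | exists x : H, hnorm x = 1 /\ r = hnorm (T x)].

Definition numrad (T : H -> H) : R :=
  sup [set r : R | exists x : H, hnorm x = 1 /\ r = complex.Re `|ip (T x) x|].

End Hilbert.

Definition nonneg_nondecr_convex_on_nonneg (R : realType) (h : R -> R) : Prop :=
  [/\ (forall x : R, 0 <= x -> 0 <= h x),
      (forall x y : R, 0 <= x -> x <= y -> h x <= h y) &
      (forall (x y t : R), 0 <= x -> 0 <= y -> 0 <= t -> t <= 1 ->
          h (t * x + (1 - t) * y) <= t * h x + (1 - t) * h y)].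

(* For a unit vector x with A x <> 0, put y := A x / ||A x|| and a := A^* y.
   Then <a, x> = ||A x|| is real, so the reflection u := 2 <a, x> x - a of a
   through the line of x has ||u|| = ||a|| <= ||A||.  Hence
     2 <A^* B x, x> = 2 <B x, A x> = <B u, y> + <B A^* y, y>,
   whose modulus is at most ||B|| ||A|| + w(B A^* ).  Thus w(A^* B) is at most
   the midpoint of ||A|| ||B|| and w(B A^* ), and h, being non-decreasing and
   convex, maps it below the midpoint of the values. *)

From HB Require Import structures.
From mathcomp Require Import all_boot all_order all_algebra.
From mathcomp Require Import complex.
From mathcomp Require Import boolp classical_sets reals.
From mathcomp Require Import ring.
Import Order.TTheory GRing.Theory Num.Theory.
Local Open Scope ring_scope.

Lemma Re_normr_le (R : rcfType) (z : R[i]) (t : R) :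
  (complex.Re `|z| <= t) = (`|z| <= t%:C)%C.
Proof. by rewrite -lecR RRe_real // normr_real. Qed.

Lemma Re_normr_ge0 (R : rcfType) (z : R[i]) : 0 <= complex.Re `|z|.
Proof. by rewrite -ler0c RRe_real ?normr_real // normr_ge0. Qed.

Lemma conj_real_complex (R : rcfType) (t : R) : (t%:C%C : R[i])^* = t%:C%C.
Proof. by apply: conj_Creal; apply/complex_realP; exists t. Qed.

Lemma sup_ge0 (R : realType) (S : set R) :
  (forall r, S r -> 0 <= r) -> 0 <= sup S.
Proof.
move=> S_ge0; have [supS|/sup_out->//] := pselect (has_sup S).
have [[r Sr] _] := supS.
exact: le_trans (S_ge0 r Sr) (sup_upper_bound supS Sr).
Qed.

Lemma ge0_ge_sup (R : realType) (S : set R) (m : R) :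
  0 <= m -> (forall r, S r -> r <= m) -> sup S <= m.
Proof.
move=> m_ge0 Sm; have [S0|S0] := pselect (S !=set0)%classic; first exact: ge_sup.
suff -> : S = set0 by rewrite sup0.
by apply/seteqP; split=> // x Sx; apply: S0; exists x.
Qed.

Lemma midpoint_le_nonneg_nondecr_convex (R : realType) (h : R -> R) (w p q : R) :
  nonneg_nondecr_convex_on_nonneg h -> 0 <= w -> 0 <= p -> 0 <= q ->
  w <= 2^-1 * (p + q) -> h w <= 2^-1 * h p + 2^-1 * h q.
Proof.
move=> [_ h_nondecr h_convex] w_ge0 p_ge0 q_ge0 w_le.
have half : 1 - 2^-1 = 2^-1 :> R by field.
have half_ge0 : 0 <= 2^-1 :> R by rewrite invr_ge0 ler0n.
have half_le1 : 2^-1 <= 1 :> R by rewrite invf_le1 ?ler1n ?ltr0n.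
apply: le_trans (h_nondecr _ _ w_ge0 w_le) _.
by have := h_convex p q 2^-1 p_ge0 q_ge0 half_ge0 half_le1; rewrite half -mulrDr.
Qed.

Section LinearFun.
Variables (R : pzRingType) (U : lmodType R) (T : U -> U).
Hypothesis T_linear : linear T.

Lemma linfun0 : T 0 = 0.
Proof. by have := T_linear (-1) 0 0; rewrite scaler0 addr0 scaleN1r addNr. Qed.

Lemma linfunD u v : T (u + v) = T u + T v.
Proof. by have := T_linear 1 u v; rewrite !scale1r. Qed.

Lemma linfunZ a u : T (a *: u) = a *: T u.
Proof. by have := T_linear a u 0; rewrite !addr0 linfun0 addr0. Qed.

End LinearFun.

Section InnerProduct.
Variables (R : realType) (H : lmodType R[i]) (ip : H -> H -> R[i]).
Hypothesis ip_inner : is_inner_product ip.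
Local Notation nrm := (hnorm ip).

Lemma ipC x y : ip x y = (ip y x)^*.
Proof. by case: ip_inner. Qed.

Lemma ipxx_ge0 x : 0 <= ip x x.
Proof. by case: ip_inner. Qed.

Lemma ipxx_eq0 x : ip x x = 0 -> x = 0.
Proof. by case: ip_inner => _ _ _; apply. Qed.

Lemma ipDl x y z : ip (x + y) z = ip x z + ip y z.
Proof. by case: ip_inner => /(_ 1 x y z); rewrite scale1r mul1r. Qed.

Lemma ip0l z : ip 0 z = 0.
Proof. by apply: (@addrI _ (ip 0 z)); rewrite -ipDl !addr0. Qed.

Lemma ipZl a x z : ip (a *: x) z = a * ip x z.
Proof. by case: ip_inner => /(_ a x 0 z); rewrite !addr0 ip0l addr0. Qed.

Lemma ipNl x z : ip (- x) z = - ip x z.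
Proof. by rewrite -scaleN1r ipZl mulN1r. Qed.

Lemma ipBl x y z : ip (x - y) z = ip x z - ip y z.
Proof. by rewrite ipDl ipNl. Qed.

Lemma ipDr x y z : ip x (y + z) = ip x y + ip x z.
Proof. by rewrite ipC ipDl rmorphD /= -!ipC. Qed.

Lemma ipZr x a y : ip x (a *: y) = a^* * ip x y.
Proof. by rewrite ipC ipZl rmorphM /= -ipC. Qed.

Lemma ip0r x : ip x 0 = 0.
Proof. by rewrite ipC ip0l rmorph0. Qed.

Lemma ipBr x y z : ip x (y - z) = ip x y - ip x z.
Proof. by rewrite ipC ipBl rmorphB /= -!ipC. Qed.

Lemma hnorm_ge0 x : 0 <= nrm x.
Proof. exact: sqrtr_ge0. Qed.

Lemma ipxx_sqr x : ip x x = ((nrm x) ^+ 2)%:C%C.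
Proof.
have Re_ipxx : (complex.Re (ip x x))%:C%C = ip x x := RRe_real (ger0_real (ipxx_ge0 x)).
by rewrite /hnorm sqr_sqrtr // -ler0c Re_ipxx ipxx_ge0.
Qed.

Lemma hnorm_eq0 x : nrm x = 0 -> x = 0.
Proof. by move=> x0; apply: ipxx_eq0; rewrite ipxx_sqr x0 expr0n. Qed.

Lemma hnorm0 : nrm 0 = 0.
Proof. by rewrite /hnorm ip0l sqrtr0. Qed.

Lemma hnorm_gt0 {x} : x != 0 -> 0 < nrm x.
Proof. by move=> x0; rewrite lt_def hnorm_ge0 andbT; apply: contra_neq x0 => /hnorm_eq0. Qed.

Lemma eq_hnorm u v : ip u u = ip v v -> nrm u = nrm v.
Proof.
move=> uv; apply/eqP; rewrite -(eqrXn2 (_ : 0 < 2)%N) ?hnorm_ge0 //.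
by apply/eqP/complexI; rewrite -!ipxx_sqr.
Qed.

Lemma hnormZ (c : R) x : 0 <= c -> nrm (c%:C%C *: x) = c * nrm x.
Proof.
move=> c_ge0; apply/eqP; rewrite -(eqrXn2 (_ : 0 < 2)%N) ?mulr_ge0 ?hnorm_ge0 //.
apply/eqP/complexI; rewrite -ipxx_sqr ipZl ipZr conj_real_complex ipxx_sqr.
by rewrite !(rmorphM, rmorphXn); ring.
Qed.

Lemma hnorm_normalize {x} : x != 0 -> nrm ((nrm x)^-1%:C%C *: x) = 1.
Proof. by move=> x0; rewrite hnormZ ?invr_ge0 ?hnorm_ge0 // mulVf // gt_eqF ?hnorm_gt0. Qed.

Lemma normr_ip_le x y : `|ip x y| <= (nrm x * nrm y)%:C%C.
Proof.
have [->|y0] := eqVneq y 0; first by rewrite ip0r normr0 ler0c mulr_ge0 ?hnorm_ge0.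
set p := ip x y; set r := ip y y.
have r0 : r != 0 by apply: contra_neq y0 => /ipxx_eq0.
have rJ : r^* = r := conj_Creal (ger0_real (ipxx_ge0 y)).
(* expand 0 <= <x - (p / r) y, x - (p / r) y> * r *)
have := mulr_ge0 (ipxx_ge0 (x - (p / r) *: y)) (ipxx_ge0 y).
rewrite ipBl !ipBr !ipZl !ipZr -/p -/r (ipC y x) -/p fmorph_div /= rJ.
have -> : (ip x x - p^* / r * p - (p / r * p^* - p / r * (p^* / r * r))) * r
          = ip x x * r - p * p^* by field.
rewrite subr_ge0 -normCK /r !ipxx_sqr !rmorphXn -exprMn -rmorphM /= => sqr_le.
by rewrite -(ler_pXn2r (_ : 0 < 2)%N) ?nnegrE ?normr_ge0 ?ler0c ?mulr_ge0 ?hnorm_ge0.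
Qed.

Lemma hnorm_reflect a x (r : R) : nrm x = 1 -> ip a x = r%:C%C ->
  nrm ((2 * r)%:C%C *: x - a) = nrm a.
Proof.
move=> x1 axr; apply: eq_hnorm.
rewrite !(ipBl, ipBr, ipZl, ipZr) (ipC x a) axr ipxx_sqr x1 expr1n.
by rewrite !conj_real_complex rmorphM rmorph_nat; ring.
Qed.

Lemma opnorm_ge0 T : 0 <= opnorm ip T.
Proof. by apply: sup_ge0 => _ [x [_ ->]]; apply: hnorm_ge0. Qed.

Lemma numrad_ge0 T : 0 <= numrad ip T.
Proof. by apply: sup_ge0 => _ [x [_ ->]]; apply: Re_normr_ge0. Qed.

Lemma hnorm_op_le T z : bounded_op ip T -> nrm (T z) <= opnorm ip T * nrm z.
Proof.
case=> T_linear [M T_le].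
have [->|z0] := eqVneq z 0; first by rewrite linfun0 // hnorm0 mulr0.
rewrite -ler_pdivrMr ?hnorm_gt0 // mulrC.
have z1 := hnorm_normalize z0.
rewrite -hnormZ ?invr_ge0 ?hnorm_ge0 // -linfunZ //.
apply: ub_le_sup; last by exists ((nrm z)^-1%:C%C *: z).
by exists M => _ [x [x1 ->]]; rewrite (le_trans (T_le x)) // x1 mulr1.
Qed.

Lemma hnorm_adjoint_le A As y : bounded_op ip A -> is_adjoint ip A As ->
  nrm (As y) <= opnorm ip A * nrm y.
Proof.
move=> A_bounded A_adj; set a := As y.
have [a0|a0] := eqVneq (nrm a) 0; first by rewrite a0 mulr_ge0 ?opnorm_ge0 ?hnorm_ge0.
have : nrm a ^+ 2 <= opnorm ip A * nrm a * nrm y.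
  rewrite -lecR -ipxx_sqr -[ip a a]ger0_norm ?ipxx_ge0 // {2}/a -A_adj.
  apply: le_trans (normr_ip_le _ _) _.
  by rewrite lecR ler_wpM2r ?hnorm_ge0 ?hnorm_op_le.
by rewrite expr2 mulrAC ler_pM2r // lt_def a0 hnorm_ge0.
Qed.

Lemma Re_normr_ip_le_numrad T M z : (forall x, nrm x = 1 -> nrm (T x) <= M) ->
  nrm z = 1 -> complex.Re `|ip (T z) z| <= numrad ip T.
Proof.
move=> T_le z1; apply: ub_le_sup; last by exists z.
exists M => _ [x [x1 ->]]; rewrite Re_normr_le.
by apply: le_trans (normr_ip_le _ _) _; rewrite lecR x1 mulr1 T_le.
Qed.

Section AdjointProduct.
Variables (A As B : H -> H).
Hypotheses (A_bounded : bounded_op ip A) (B_bounded : bounded_op ip B).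
Hypothesis A_adj : is_adjoint ip A As.

Lemma hnorm_comp_adj_le v : nrm v = 1 -> nrm (B (As v)) <= opnorm ip B * opnorm ip A.
Proof.
move=> v1; apply: le_trans (hnorm_op_le _ _ B_bounded) (ler_wpM2l (opnorm_ge0 _) _).
by have := hnorm_adjoint_le _ _ v A_bounded A_adj; rewrite v1 mulr1.
Qed.

Lemma Re_normr_ip_adj_comp_le x : nrm x = 1 ->
  complex.Re `|ip (As (B x)) x|
    <= 2^-1 * (opnorm ip A * opnorm ip B + numrad ip (B \o As)).
Proof.
move=> x1; have [B_linear _] := B_bounded.
have -> : ip (As (B x)) x = ip (B x) (A x) by rewrite ipC -A_adj -ipC.
rewrite Re_normr_le rmorphM rmorphV ?unitfE ?pnatr_eq0 //= rmorph_nat.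
rewrite ler_pdivlMl ?ltr0n // -[2%:R]normr_nat -normrM.
have [->|Ax0] := eqVneq (A x) 0.
  by rewrite ip0r mulr0 normr0 ler0c addr_ge0 ?mulr_ge0 ?opnorm_ge0 ?numrad_ge0.
set n := nrm (A x); have n_gt0 : 0 < n := hnorm_gt0 Ax0.
set y := n^-1%:C%C *: A x; have y1 : nrm y = 1 := hnorm_normalize Ax0.
set a := As y; set u := (2 * n)%:C%C *: x - a.
have ax : ip a x = n%:C%C.
  rewrite ipC -A_adj /y ipZr conj_real_complex ipxx_sqr -rmorphM conj_real_complex.
  by rewrite expr2 mulKf ?gt_eqF.
have split_ip : 2 * ip (B x) (A x) = ip (B u) y + ip (B (As y)) y.
  rewrite -ipDl -linfunD // subrK linfunZ // ipZl ipZr conj_real_complex.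
  by rewrite mulrA -rmorphM /= mulfK ?gt_eqF // (rmorph_nat (real_complex R)).
rewrite split_ip rmorphD; apply: le_trans (ler_normD _ _) _; apply: lerD.
  apply: le_trans (normr_ip_le _ _) _; rewrite lecR y1 mulr1 mulrC.
  apply: le_trans (hnorm_op_le _ _ B_bounded) (ler_wpM2l (opnorm_ge0 _) _).
  rewrite hnorm_reflect //.
  by have := hnorm_adjoint_le _ _ y A_bounded A_adj; rewrite y1 mulr1.
by rewrite -Re_normr_le (Re_normr_ip_le_numrad (B \o As) _ _ hnorm_comp_adj_le y1).
Qed.

Lemma numrad_adj_comp_le :
  numrad ip (As \o B) <= 2^-1 * (opnorm ip A * opnorm ip B + numrad ip (B \o As)).
Proof.
apply: ge0_ge_sup => [|_ [x [x1 ->]]]; last exact: Re_normr_ip_adj_comp_le.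
by rewrite mulr_ge0 ?invr_ge0 ?ler0n ?addr_ge0 ?mulr_ge0 ?opnorm_ge0 ?numrad_ge0.
Qed.

End AdjointProduct.
End InnerProduct.

Theorem mainTheorem4 (R : realType) (H : lmodType R[i]) (ip : H -> H -> R[i])
  (A As B : H -> H) (h : R -> R) :
  is_hilbert ip ->
  bounded_op ip A -> bounded_op ip B ->
  is_adjoint ip A As ->
  nonneg_nondecr_convex_on_nonneg h ->
  h (numrad ip (As \o B)) <=
    2^-1 * h (opnorm ip A * opnorm ip B) + 2^-1 * h (numrad ip (B \o As)).
Proof.
move=> [ip_inner _] A_bounded B_bounded A_adj h_convex.
apply: midpoint_le_nonneg_nondecr_convex => //.
- exact: numrad_ge0.
- by rewrite mulr_ge0 ?opnorm_ge0.
- exact: numrad_ge0.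
- exact: numrad_adj_comp_le.
Qed.
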